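(* Let $n\ge 3$, let $J_n\in M_n(\mathbb{C})$ be the nilpotent Jordan block $J_n=\sum_{i=1}^{n-1}E_{i,i+1}$, and let $B_n=E_{n-1,1}-E_{n,2}\in M_n(\mathbb{C})$. Then $\mathcal L(\{J_n,B_n\})=M_n(\mathbb{C})$, $l(\{J_n,B_n\})=2n-3$, and $l_0(\{J_n,B_n\})=2n-2$.
   Context: $E_{i,j}$ denotes the matrix unit with $1$ in position $(i,j)$ and $0$ elsewhere. For a finite subset $\mathcal S$ of $M_n(\mathbb{F})$: a word of length $m$ is a product $S_1\cdots S_m$ with $S_j\in\mathcal S$, the word of length $0$ being $I_n$. $\mathcal L_k(\mathcal S)$ is the span of words of length at most $k$ including $I_n$; $\mathcal L(\mathcal S)=\bigcup_k\mathcal L_k(\mathcal S)$; $\mathcal L_k^0(\mathcal S)$ is the span of words of length between $1$ and $k$ (identity not automatically included). $l(\mathcal S)$ is the smallest $k$ with $\mathcal L_k(\mathcal S)=\mathcal L_{k+1}(\mathcal S)$, and $l_0(\mathcal S)$ is the smallest $k$ with $\mathcal L^0_k(\mathcal S)=\mathcal L^0_{k+1}(\mathcal S)$. *)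

From HB Require Import structures.
From mathcomp Require Import all_boot all_order all_algebra all_field.
Set Implicit Arguments. Unset Strict Implicit. Unset Printing Implicit Defensive.
Import GRing.Theory.
Local Open Scope ring_scope.

Section Words.
Variables (F : fieldType) (n : nat).

Fixpoint words (S : seq 'M[F]_n) (m : nat) : seq 'M[F]_n :=
  match m with
  | 0 => [:: 1%:M]
  | m'.+1 => [seq A *m W | A <- S, W <- words S m']
  end.

Definition Lk (S : seq 'M[F]_n) (k : nat) : {vspace 'M[F]_n} :=
  <<flatten [seq words S m | m <- iota 0 k.+1]>>%VS.

Definition L0k (S : seq 'M[F]_n) (k : nat) : {vspace 'M[F]_n} :=
  <<flatten [seq words S m | m <- iota 1 k]>>%VS.

Definition inL (S : seq 'M[F]_n) (A : 'M[F]_n) : Prop :=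
  exists k, A \in Lk S k.

Definition is_l (S : seq 'M[F]_n) (k : nat) : Prop :=
  Lk S k = Lk S k.+1 /\ forall j, (j < k)%N -> Lk S j <> Lk S j.+1.

Definition is_l0 (S : seq 'M[F]_n) (k : nat) : Prop :=
  L0k S k = L0k S k.+1 /\ forall j, (j < k)%N -> L0k S j <> L0k S j.+1.

End Words.

Definition Jn (F : fieldType) (n : nat) : 'M[F]_n :=
  \matrix_(i, j) (((j : nat) == (i : nat).+1)%:R).

(* B_n = E_{n-1,1} - E_{n,2}  (0-based: (n-2, 0) and (n-1, 1)) *)
Definition Bn (F : fieldType) (n : nat) : 'M[F]_n :=
  \matrix_(i, j) ((((i : nat) == (n - 2)%N) && ((j : nat) == 0%N))%:R
                  - (((i : nat) == (n - 1)%N) && ((j : nat) == 1%N))%:R).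

From HB Require Import structures.
From mathcomp Require Import all_boot all_order all_algebra all_field.
From mathcomp Require Import zify.
Set Implicit Arguments. Unset Strict Implicit. Unset Printing Implicit Defensive.
Import GRing.Theory.
Local Open Scope ring_scope.

(* With indices from 0 and n = k + 3: J and B are homogeneous of degree 1 for
   the grading of M_n by (column - row) mod (n - 1), so a word of length m can
   only have a nonzero trace when n - 1 divides m; an induction tracking the
   wrapped diagonals shows that words of length n - 1 are traceless as well.
   Hence X |-> tr (J X) kills L_(2n-4) and X |-> tr X kills L^0_(2n-3), so
   these spaces miss E_(1,0) and E_(0,0).  Conversely
   J^(n-2-i) B J^q = E_(i,q) - E_(i+1,q+1), B J^(n-3) B J^q = - E_(n-1,q) and
   J^(n-1) = E_(0,n-1); telescoping along diagonals, and using I = sum E_(i,i)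
   with n invertible, these span M_n within length 2n - 3, and one more factor
   J or B gives L^0_(2n-2) = M_n.  Once the chain L_k (or L^0_k) stalls it is
   constant, which pins down l and l_0. *)

Section WordSpans.
Variables (F : fieldType) (n : nat) (S : seq 'M[F]_n).

Lemma words_consP W m :
  reflect (exists2 A, A \in S & exists2 W', W' \in words S m & W = A *m W')
          (W \in words S m.+1).
Proof.
apply: (iffP allpairsP) => [[[A W'] [/= hA hW' ->]]|[A hA [W' hW' ->]]].
  by exists A => //; exists W'.
by exists (A, W').
Qed.

Lemma words_mul X Y a b :
  X \in words S a -> Y \in words S b -> X *m Y \in words S (a + b).
Proof.
elim: a X => [|a IH] X; first by rewrite mem_seq1 => /eqP -> hY; rewrite mul1mx.
by move=> /words_consP [A hA [W hW ->]] hY; rewrite -mulmxA; apply/words_consP;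
  exists A => //; exists (W *m Y) => //; apply: IH.
Qed.

Lemma Lk_word W m j : W \in words S m -> (m <= j)%N -> W \in Lk S j.
Proof.
by move=> hW hm; apply: memv_span; apply/flatten_mapP; exists m; rewrite ?mem_iota.
Qed.

Lemma L0k_word W m j : W \in words S m -> (0 < m <= j)%N -> W \in L0k S j.
Proof.
move=> hW hm; apply: memv_span; apply/flatten_mapP; exists m => //.
by rewrite mem_iota add1n ltnS.
Qed.

Lemma LkP W j : W \in flatten [seq words S m | m <- iota 0 j.+1] ->
  exists2 m, (m <= j)%N & W \in words S m.
Proof. by move=> /flatten_mapP [m]; rewrite mem_iota ltnS => hm hW; exists m. Qed.

Lemma L0kP W j : W \in flatten [seq words S m | m <- iota 1 j] ->
  exists2 m, (0 < m <= j)%N & W \in words S m.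
Proof. by move=> /flatten_mapP [m]; rewrite mem_iota add1n ltnS => hm hW; exists m. Qed.

Lemma span_mulmx_memv (A : 'M[F]_n) (X : seq 'M[F]_n) (U : {vspace 'M[F]_n}) V :
  {in X, forall W, A *m W \in U} -> V \in <<X>>%VS -> A *m V \in U.
Proof.
move=> hX /(@coord_span _ _ _ (in_tuple X)) ->; rewrite mulmx_sumr.
by apply: memv_suml => i _; rewrite -scalemxAr memvZ // hX // mem_nth.
Qed.

Lemma mxtrace_span_eq0 (P : 'M[F]_n) (X : seq 'M[F]_n) V :
  {in X, forall W, \tr (P *m W) = 0} -> V \in <<X>>%VS -> \tr (P *m V) = 0.
Proof.
move=> hX /(@coord_span _ _ _ (in_tuple X)) ->.
rewrite mulmx_sumr (big_morph _ (@mxtraceD _ _) (mxtrace0 _ _)) big1 // => i _.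
by rewrite -scalemxAr mxtraceZ hX ?mulr0 // mem_nth.
Qed.

Lemma Lk_mulmx A X j : A \in S -> X \in Lk S j -> A *m X \in Lk S j.+1.
Proof.
move=> hA; apply: span_mulmx_memv => W /LkP [m hm hW].
by apply: (@Lk_word _ m.+1) => //; apply/words_consP; exists A => //; exists W.
Qed.

Lemma L0k_mulmx A X j : A \in S -> X \in L0k S j -> A *m X \in L0k S j.+1.
Proof.
move=> hA; apply: span_mulmx_memv => W /L0kP [m hm hW].
by apply: (@L0k_word _ m.+1); [apply/words_consP; exists A => //; exists W | lia].
Qed.

Lemma Lk_mulmx_L0k A X j : A \in S -> X \in Lk S j -> A *m X \in L0k S j.+1.
Proof.
move=> hA; apply: span_mulmx_memv => W /LkP [m hm hW].
by apply: (@L0k_word _ m.+1); [apply/words_consP; exists A => //; exists W | lia].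
Qed.

Lemma Lk_stable j : Lk S j = Lk S j.+1 -> forall i, (Lk S i <= Lk S j)%VS.
Proof.
move=> e i; apply/span_subvP => W /LkP [m _]; elim: m W => [|m IH] W hW.
  exact: Lk_word hW _.
case: (leqP m.+1 j) => hm; first exact: Lk_word hW hm.
by move: hW => /words_consP [A hA [W' hW' ->]]; rewrite e Lk_mulmx ?IH.
Qed.

Lemma L0k_stable j : L0k S j = L0k S j.+1 -> forall i, (L0k S i <= L0k S j)%VS.
Proof.
move=> e i; apply/span_subvP => W /L0kP [m /andP [m_gt0 _]].
elim: m m_gt0 W => [//|m IH] _ W hW.
case: (leqP m.+1 j) => hm; first by apply: L0k_word hW _; lia.
rewrite e; case: m IH hW {hm} => [_ hW|m IH]; first exact: L0k_word hW _.
by move=> /words_consP [A hA [W' hW' ->]]; rewrite L0k_mulmx ?IH.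
Qed.

Lemma Lk_subv i j : (i <= j)%N -> (Lk S i <= Lk S j)%VS.
Proof.
by move=> hij; apply/span_subvP => W /LkP [m hm hW]; apply: Lk_word hW (leq_trans hm hij).
Qed.

Lemma L0k_subv i j : (i <= j)%N -> (L0k S i <= L0k S j)%VS.
Proof.
move=> hij; apply/span_subvP => W /L0kP [m hm hW]; apply: L0k_word hW _; lia.
Qed.

Lemma is_l_full N : Lk S N.+1 = fullv -> Lk S N != fullv -> is_l S N.+1.
Proof.
move=> full notfull; split.
  by apply/eqP; rewrite eqEsubv Lk_subv //= full subvf.
move=> j hj e; move/negP: notfull; apply; rewrite eqEsubv subvf /= -full.
exact: subv_trans (Lk_stable e _) (Lk_subv _).
Qed.

Lemma is_l0_full N : L0k S N.+1 = fullv -> L0k S N != fullv -> is_l0 S N.+1.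
Proof.
move=> full notfull; split.
  by apply/eqP; rewrite eqEsubv L0k_subv //= full subvf.
move=> j hj e; move/negP: notfull; apply; rewrite eqEsubv subvf /= -full.
exact: subv_trans (L0k_stable e _) (L0k_subv _).
Qed.

End WordSpans.

Section JordanPair.
Variables (F : fieldType) (k : nat).
Local Notation n := k.+3.
Local Notation J := (Jn F n).
Local Notation B := (Bn F n).
Local Notation S := [:: J; B].

(* Entries and matrix units indexed by [nat], zero out of range, so that all
   index arithmetic can be discharged by [lia]. *)
Definition ent (X : 'M[F]_n) (a b : nat) : F :=
  if ((a < n) && (b < n))%N then X (inord a) (inord b) else 0.

Definition E (a b : nat) : 'M[F]_n :=
  if ((a < n) && (b < n))%N then delta_mx (inord a) (inord b) else 0.

Ltac case_indices :=
  repeat (match goal with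
   | |- context [(?x == ?y)%N] => let H := fresh in case: (x =P y) => H
   | |- context [(?x <= ?y)%N] => let H := fresh in case: (leqP x y) => H
   end; try (exfalso; lia));
  rewrite /= ?(mulr1n, mulr0n, mul1r, mul0r, mulr1, mulr0, subr0, sub0r, subrr,
               oppr0, opprK, addr0, add0r) //.

Lemma ent_ext X Y :
  (forall a b, (a < n)%N -> (b < n)%N -> ent X a b = ent Y a b) -> X = Y.
Proof.
move=> eXY; apply/matrixP => i j; have := eXY i j (ltn_ord i) (ltn_ord j).
by rewrite /ent !ltn_ord /= !inord_val.
Qed.

Lemma entD X Y a b : ent (X + Y) a b = ent X a b + ent Y a b.
Proof. by rewrite /ent; case: ifP; rewrite ?mxE ?addr0. Qed.

Lemma entN X a b : ent (- X) a b = - ent X a b.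
Proof. by rewrite /ent; case: ifP; rewrite ?mxE ?oppr0. Qed.

Lemma sum_pick (P : bool) (v : nat) (G : 'I_n -> F) : (v < n)%N ->
  \sum_(c < n) (P && (c == v :> nat))%:R * G c = P%:R * G (inord v).
Proof.
move=> hv; rewrite (bigD1 (inord v)) //= inordK // eqxx andbT big1 ?addr0 //.
move=> c hc; case: eqP => [e|]; last by rewrite andbF mul0r.
by move: hc; rewrite -e inord_val eqxx.
Qed.

Lemma sum_pick1 (v : nat) (G : 'I_n -> F) : (v < n)%N ->
  \sum_(c < n) (c == v :> nat)%:R * G c = G (inord v).
Proof. by move=> hv; have := sum_pick true G hv; rewrite mul1r. Qed.

Lemma ent1 a b : ent 1%:M a b = ((a == b) && (a < n)%N)%:R.
Proof.
rewrite /ent; case: (ltnP a n) => ha; case: (ltnP b n) => hb /=; rewrite ?andbF //.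
  by rewrite mxE andbT -(inj_eq val_inj) /= !inordK.
by case: eqP => // ?; lia.
Qed.

Lemma entE c d a b :
  ent (E c d) a b = [&& a == c, b == d, (c < n)%N & (d < n)%N]%:R.
Proof.
rewrite /ent /E; case: (ltnP a n) => ha; case: (ltnP b n) => hb;
  case: (ltnP c n) => hc; case: (ltnP d n) => hd /=; rewrite ?mxE ?andbF ?andbT //=;
  try by (case: eqP => ? //; case: eqP => ? //=; lia).
by rewrite -!(inj_eq val_inj) /= !inordK.
Qed.

Lemma ent_B a b :
  ent B a b = ((a == k.+1) && (b == 0))%:R - ((a == k.+2) && (b == 1))%:R.
Proof.
rewrite /ent /Bn; case: (ltnP a n) => ha; case: (ltnP b n) => hb /=.
- by rewrite mxE !inordK.
all: by case_indices.
Qed.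

Lemma ent_mulJ X a b : ent (J *m X) a b = ent X a.+1 b.
Proof.
rewrite /ent; case: (ltnP b n) => hb; last by rewrite !andbF.
rewrite !andbT; case: (ltnP a n) => ha; last by rewrite ltnNge (leq_trans ha).
rewrite mxE; case: (ltnP a.+1 n) => ha1.
  rewrite (bigD1 (inord a.+1)) //= big1 ?addr0.
    by rewrite /Jn mxE !inordK // eqxx mul1r.
  move=> c hc; rewrite /Jn mxE inordK //; case: eqP => [e|]; last by rewrite mul0r.
  by move: hc; rewrite -e inord_val eqxx.
rewrite big1 // => c _; rewrite /Jn mxE inordK //.
by case: eqP => [e|]; [have := ltn_ord c; lia | rewrite mul0r].
Qed.

Lemma ent_mulJr X a b : (b < n)%N ->
  ent (X *m J) a b = if b is b'.+1 then ent X a b' else 0.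
Proof.
move=> hb; rewrite /ent hb andbT; case: (ltnP a n) => ha /=; last by case: b hb.
rewrite mxE; case: b hb => [|b] hb.
  by rewrite big1 // => c _; rewrite /Jn mxE !inordK //= mulr0.
rewrite (ltn_trans (ltnSn b) hb) (bigD1 (inord b)) //= big1 ?addr0.
  by rewrite /Jn mxE !inordK ?eqxx ?mulr1 // (ltn_trans (ltnSn b) hb).
move=> c hc; rewrite /Jn mxE inordK //; case: eqP => [e|]; last by rewrite mulr0.
by move: hc; rewrite (_ : c = inord b) ?eqxx //; apply/val_inj; rewrite /= inordK; lia.
Qed.

Lemma ent_mulB X a b :
  ent (B *m X) a b = (a == k.+1)%:R * ent X 0 b - (a == k.+2)%:R * ent X 1 b.
Proof.
rewrite /ent; case: (ltnP b n) => hb; last by rewrite !andbF !mulr0 subr0.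
rewrite !andbT /=; case: (ltnP a n) => ha; last by case_indices.
rewrite mxE; under eq_bigr => c _ do rewrite /Bn mxE inordK // mulrBl.
by rewrite sumrB !sum_pick.
Qed.

Lemma ent_Jpow_mul p X a b : ent (J ^+ p *m X) a b = ent X (a + p) b.
Proof.
elim: p a => [|p IH] a; first by rewrite expr0 mul1mx addn0.
by rewrite exprS -mulmxE -mulmxA ent_mulJ IH addSnnS.
Qed.

Lemma ent_Jpow p a b : ent (J ^+ p) a b = ((a + p == b) && (a + p < n)%N)%:R.
Proof. by rewrite -[J ^+ p]mulmx1 ent_Jpow_mul ent1. Qed.

Lemma ent_mul_Jpow q X a b : (b < n)%N ->
  ent (X *m J ^+ q) a b = if (q <= b)%N then ent X a (b - q) else 0.
Proof.
elim: q b => [|q IH] b hb; first by rewrite expr0 mulmx1 subn0.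
rewrite exprSr -mulmxE mulmxA ent_mulJr //; case: b hb => [|b] hb //.
by rewrite IH ?ltnS ?subSS //; lia.
Qed.

Lemma Jpow_word p : J ^+ p \in words S p.
Proof.
elim: p => [|p IH]; first by rewrite expr0 mem_seq1.
by rewrite exprS; apply/words_consP; exists J; rewrite ?mem_head //; exists (J ^+ p).
Qed.

Lemma B_word : B \in words S 1.
Proof.
apply/words_consP; exists B; rewrite ?inE ?eqxx ?orbT //.
by exists 1%:M; rewrite ?mulmx1 ?mem_seq1.
Qed.

Lemma JBJ_E i q : (i <= k.+1)%N -> (q < n)%N ->
  J ^+ (k.+1 - i) *m B *m J ^+ q = E i q - E i.+1 q.+1.
Proof.
move=> hi hq; apply: ent_ext => a b ha hb.
rewrite -mulmxA ent_Jpow_mul ent_mul_Jpow // entD entN !entE ent_B; case_indices.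
Qed.

Lemma BJB_E j : (j < n)%N -> B *m J ^+ k *m B *m J ^+ j = - E k.+2 j.
Proof.
move=> hj; apply: ent_ext => a b ha hb.
rewrite -!mulmxA ent_mulB !ent_Jpow_mul !ent_mulB !ent_Jpow entN entE.
case_indices.
Qed.

Lemma Jpow_E : J ^+ k.+2 = E 0 k.+2.
Proof.
apply: ent_ext => a b ha hb.
by rewrite ent_Jpow entE; case_indices.
Qed.

Local Notation V := (Lk S (2 * k + 3)).

Lemma E_diff_in i c : (i <= k.+1)%N -> (c < n)%N -> (c <= i + k.+1)%N ->
  E i c - E i.+1 c.+1 \in V.
Proof.
move=> hi hc hci; rewrite -JBJ_E //.
apply: (@Lk_word _ _ _ _ (k.+1 - i + 1 + c)); last lia.
by rewrite words_mul ?Jpow_word // words_mul ?Jpow_word ?B_word.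
Qed.

Lemma E_last_row_in c : (c <= k.+1)%N -> E k.+2 c \in V.
Proof.
move=> hc; rewrite -[E _ _]opprK -BJB_E; last lia.
rewrite memvN; apply: (@Lk_word _ _ _ _ (1 + k + 1 + c)); last lia.
by rewrite !words_mul ?Jpow_word ?B_word.
Qed.

Lemma E_corner_in : E 0 k.+2 \in V.
Proof. by rewrite -Jpow_E; apply: Lk_word (Jpow_word _) _; lia. Qed.

Lemma E_offdiag_in i c : (i < n)%N -> (c < n)%N -> c != i -> E i c \in V.
Proof.
move=> hi; have [d hd] : exists d, (i + d = k.+2)%N by exists (k.+2 - i)%N; lia.
elim: d i hi hd c => [|d IH] i hi hd c hc hci.
  by rewrite addn0 in hd; subst i; apply: E_last_row_in; move: hci => /eqP; lia.
case: (ltnP c k.+2) => hc2.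
  rewrite -[E i c](subrK (E i.+1 c.+1)); apply: memvD.
    by apply: E_diff_in; lia.
  by apply: IH; [lia | lia | lia | apply/eqP; move/eqP: hci; lia].
have -> : c = k.+2 by lia.
case: i hi hd {hci hc hc2} => [|i] hi hd; first exact: E_corner_in.
have E_out : E i.+2 k.+3 = 0 by rewrite /E ltnn andbF.
by rewrite -[E _ _]subr0 -E_out; apply: E_diff_in; lia.
Qed.

Lemma E_diag_diff_in i : (i < n)%N -> E 0 0 - E i i \in V.
Proof.
elim: i => [|i IH] hi; first by rewrite subrr mem0v.
rewrite -[E 0 0](subrK (E i i)) -addrA; apply: memvD; first by apply: IH; lia.
by apply: E_diff_in; lia.
Qed.

Lemma E_diag_in i : n%:R != 0 :> F -> (i < n)%N -> E i i \in V.
Proof.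
move=> n_neq0 hi; suff h00 : E 0 0 \in V.
  by rewrite -[E i i](subKr (E 0 0)) memvB ?E_diag_diff_in.
have sum_diag : \sum_(i < n) E i i = 1%:M.
  by rewrite mx1_sum_delta; apply: eq_bigr => j _; rewrite /E ltn_ord /= inord_val.
have -> : E 0 0 = n%:R^-1 *: (\sum_(i < n) (E 0 0 - E i i) + 1%:M).
  rewrite -sum_diag -big_split /=; under eq_bigr => j _ do rewrite subrK.
  by rewrite sumr_const card_ord -scaler_nat scalerA mulVf // scale1r.
rewrite memvZ // memvD //; first by apply: memv_suml => j _; apply: E_diag_diff_in.
by apply: (@Lk_word _ _ _ _ 0); rewrite ?mem_seq1.
Qed.

Lemma E_span_full (U : {vspace 'M[F]_n}) :
  (forall a b, (a < n)%N -> (b < n)%N -> E a b \in U) -> U = fullv.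
Proof.
move=> EU; apply/eqP; rewrite eqEsubv subvf /=; apply/subvP => A _.
rewrite (matrix_sum_delta A); apply: memv_suml => i _; apply: memv_suml => j _.
apply: memvZ; have := EU i j (ltn_ord i) (ltn_ord j).
by rewrite /E !ltn_ord /= !inord_val.
Qed.

Lemma Lk_full : n%:R != 0 :> F -> V = fullv.
Proof.
move=> n_neq0; apply: E_span_full => a b ha hb.
by case: (eqVneq b a) => [->|hba]; [apply: E_diag_in | apply: E_offdiag_in].
Qed.

Lemma J_mul_E a b : (a < k.+2)%N -> J *m E a.+1 b = E a b.
Proof.
by move=> ha; apply: ent_ext => x y hx hy; rewrite ent_mulJ !entE; case_indices.
Qed.

Lemma B_mul_E b : B *m E 1 b = - E k.+2 b.
Proof.
by apply: ent_ext => x y hx hy; rewrite entN ent_mulB !entE; case_indices.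
Qed.

Lemma L0k_full : n%:R != 0 :> F -> L0k S (2 * k + 4) = fullv.
Proof.
move=> n_neq0; apply: E_span_full => a b ha hb.
have E_in c d : E c d \in V by rewrite Lk_full ?memvf.
rewrite (_ : 2 * k + 4 = (2 * k + 3).+1)%N; last by rewrite addnS.
case: (ltnP a k.+2) => ha2.
  by rewrite -J_mul_E //; apply: Lk_mulmx_L0k (mem_head _ _) _.
have -> : a = k.+2 by lia.
by rewrite -[E _ _]opprK -B_mul_E memvN; apply: Lk_mulmx_L0k; rewrite ?inE ?eqxx ?orbT.
Qed.

Lemma words_JBP W m : W \in words S m.+1 ->
  exists2 W', W' \in words S m & W = J *m W' \/ W = B *m W'.
Proof.
move=> /words_consP [A hA [W' hW' ->]]; exists W' => //.
by move: hA; rewrite !inE => /orP [] /eqP ->; [left | right].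
Qed.

Lemma word_ent_neq0 m W a b : W \in words S m -> ent W a b != 0 ->
  exists t, (b + t * k.+2 = a + m)%N.
Proof.
elim: m W a b => [|m IH] W a b.
  rewrite mem_seq1 => /eqP ->; rewrite ent1 => h.
  have /eqP -> : a == b by apply: contraR h => /negbTE ->.
  by exists 0%N; rewrite mul0n !addn0.
move=> /words_JBP [W' hW' [->|->]].
  by rewrite ent_mulJ => /(IH _ _ _ hW') [t ht]; exists t; lia.
rewrite ent_mulB; case: (a =P k.+1) => [ea|na]; case: (a =P k.+2) => [eb|nb].
- by exfalso; lia.
- rewrite mul1r mul0r subr0 => /(IH _ _ _ hW') [t ht].
  by exists t.+1; rewrite mulSn; lia.
- rewrite mul1r mul0r sub0r oppr_eq0 => /(IH _ _ _ hW') [t ht].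
  by exists t.+1; rewrite mulSn; lia.
- by rewrite !mul0r subr0 eqxx.
Qed.

Lemma word_ent_shift m W a : W \in words S m -> (a + m < k.+2)%N ->
  ent W a (a + m) = ent W a.+1 (a + m).+1.
Proof.
elim: m W a => [|m IH] W a.
  by rewrite mem_seq1 => /eqP -> h; rewrite !ent1 !addn0; case_indices.
move=> /words_JBP [W' hW' [->|->]] h.
  by rewrite !ent_mulJ -addSnnS IH // addSnnS.
rewrite !ent_mulB; case_indices.
apply/esym/eqP; apply: contraT => /(word_ent_neq0 hW') [t] ht; lia.
Qed.

Lemma word_wrapped_diag_sum m W : W \in words S m -> (m <= k.+2)%N ->
  \sum_(b < n) ent W (b + (k.+2 - m)) b = 0.
Proof.
elim: m W => [|m IH] W.
  rewrite mem_seq1 => /eqP -> _; apply: big1 => b _; rewrite ent1.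
  by case: eqP => //; lia.
move=> /words_JBP [W' hW' [->|->]] h.
  rewrite -[RHS](IH W' hW' (ltnW h)); apply: eq_bigr => b _; rewrite ent_mulJ.
  by congr ent; lia.
under eq_bigr => b _ do rewrite ent_mulB.
rewrite sumrB.
rewrite [X in X - _](eq_bigr (fun b : 'I_n => (b == m :> nat)%:R * ent W' 0 b));
  last by move=> b _; congr (_%:R * _); apply/eqP; case_indices.
rewrite [X in _ - X](eq_bigr (fun b : 'I_n => (b == m.+1 :> nat)%:R * ent W' 1 b));
  last first.
  by move=> b _; congr (_%:R * _); apply/eqP; case_indices.
rewrite !sum_pick1 ?inordK; try lia.
by have := @word_ent_shift m W' 0 hW'; rewrite !add0n => ->; rewrite ?subrr.
Qed.

Lemma mxtrace_ent X : \tr X = \sum_(b < n) ent X b b.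
Proof. by apply: eq_bigr => i _; rewrite /ent ltn_ord /= inord_val. Qed.

Lemma mxtrace_word m W : W \in words S m -> (0 < m <= 2 * k + 3)%N -> \tr W = 0.
Proof.
move=> hW hm; case: (m =P k.+2) => [e|ne].
  subst m; rewrite mxtrace_ent -[RHS](word_wrapped_diag_sum hW) //.
  by apply: eq_bigr => b _; rewrite subnn addn0.
rewrite mxtrace_ent; apply: big1 => b _; apply/eqP; apply: contraT.
move=> /(word_ent_neq0 hW) [[|[|t]] ht]; rewrite ?mulSn in ht; lia.
Qed.

Lemma mxtrace_E a : (a < n)%N -> \tr (E a a) = 1.
Proof.
move=> ha; rewrite mxtrace_ent.
rewrite (eq_bigr (fun b : 'I_n => (b == a :> nat)%:R * 1)) ?sum_pick1 // => b _.
by rewrite entE mulr1 ha !andbT andbb.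
Qed.

Lemma Lk_neq_full : Lk S (2 * k + 2) != fullv.
Proof.
apply/negP => /eqP full; have := memvf (E 1 0); rewrite -full.
move=> /(@mxtrace_span_eq0 _ _ J); rewrite J_mul_E // mxtrace_E // => h.
suff /eqP : (1 : F) = 0 by rewrite oner_eq0.
apply: h => W /LkP [m hm hW]; apply: (@mxtrace_word m.+1); last by lia.
by apply/words_consP; exists J; rewrite ?mem_head //; exists W.
Qed.

Lemma L0k_neq_full : L0k S (2 * k + 3) != fullv.
Proof.
apply/negP => /eqP full; have := memvf (E 0 0); rewrite -full.
move=> /(@mxtrace_span_eq0 _ _ 1%:M); rewrite mul1mx mxtrace_E // => h.
suff /eqP : (1 : F) = 0 by rewrite oner_eq0.
by apply: h => W /L0kP [m hm hW]; rewrite mul1mx; apply: mxtrace_word hW _; lia.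
Qed.

End JordanPair.

Theorem mainTheorem6 (n : nat) (hn : (3 <= n)%N) :
  (forall A : 'M[algC]_n, inL [:: Jn algC n; Bn algC n] A) /\
  is_l [:: Jn algC n; Bn algC n] (2 * n - 3)%N /\
  is_l0 [:: Jn algC n; Bn algC n] (2 * n - 2)%N.
Proof.
case: n hn => [|[|[|k]]] // _.
have n_neq0 : k.+3%:R != 0 :> algC by rewrite Num.Theory.pnatr_eq0.
have -> : (2 * k.+3 - 3 = (2 * k + 2).+1)%N by lia.
have -> : (2 * k.+3 - 2 = (2 * k + 3).+1)%N by lia.
split; last split.
- by move=> A; exists (2 * k + 3)%N; rewrite Lk_full ?memvf.
- by apply: is_l_full; [rewrite -addnS Lk_full | exact: Lk_neq_full].
- by apply: is_l0_full; [rewrite -addnS L0k_full | exact: L0k_neq_full].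
Qed.
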